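(* Let $F$, $H$, $X$, $\Omega$, $Q$ and the sequences generated by the IneIREG method be as described in the context, and suppose $H$ is $\mu$-strongly monotone for some $\mu>0$. Suppose $0<\lambda_k<1/L_k$ for all $k\ge0$, where $L_k:=L_F+\eta_kL_H$; and $\alpha_0\in[0,1]$ and $\alpha_{k+1}\le(1-\beta_k)\alpha_k$ for all $k\ge0$, where $\beta_k:=\big(\frac{1}{1-\lambda_k^2L_k^2}+\frac{1}{2\lambda_k\eta_k\mu}\big)^{-1}$. Define $p_{-1}:=1$ and $p_k:=\big(\prod_{i=0}^k(1-\beta_i)\big)^{-1}$ for $k\ge0$. Then for all $k\ge1$, $$\sum_{j=0}^{k-1}p_{j-1}\delta_j\le2kD_X^2.$$
   Context: Work in $\mathbb{R}^n$ with Euclidean inner product $\langle\cdot,\cdot\rangle$ and norm $\|\cdot\|$. The maps $F\colon \mathrm{Dom}\,F\to\mathbb{R}^n$ and $H\colon\mathrm{Dom}\,H\to\mathbb{R}^n$ are monotone and Lipschitz continuous with constants $L_F>0$ and $L_H>0$; $H$ is $\mu$-strongly monotone means $\langle H(x)-H(y),x-y\rangle\ge\mu\|x-y\|^2$ for all $x,y\in\mathrm{Dom}\,H$. $X$ is a nonempty compact convex set and $\Omega$ a nonempty closed convex set with $X\subset\Omega\subset\mathrm{Dom}\,F\cap\mathrm{Dom}\,H$; $P_X,P_\Omega$ denote orthogonal projections. $Q:=\{x\in X:\langle F(x),y-x\rangle\ge0\ \forall y\in X\}$ is assumed nonempty. $D_X:=\sup_{x,y\in X}\|x-y\|$. IneIREG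 method: start with $x_0=x_{-1}\in X$; for $k=0,1,\dots$, with parameters $\alpha_k\ge0$, $\lambda_k>0$, $\eta_k>0$, set $w_k=x_k+\alpha_k(x_k-x_{k-1})$, $w'_k=P_\Omega(w_k)$, $y_k=P_X\big(w_k-\lambda_k(F(w'_k)+\eta_kH(w'_k))\big)$, $x_{k+1}=P_X\big(w_k-\lambda_k(F(y_k)+\eta_kH(y_k))\big)$. Also $\delta_k:=\alpha_k(1+\alpha_k)\|x_k-x_{k-1}\|^2$ for $k\ge0$. *)

From HB Require Import structures.
From mathcomp Require Import all_boot all_order all_algebra.
From mathcomp Require Import all_classical all_reals all_analysis.
Set Implicit Arguments. Unset Strict Implicit. Unset Printing Implicit Defensive.
Import Order.TTheory GRing.Theory Num.Theory.
Import numFieldNormedType.Exports.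
Local Open Scope classical_set_scope.
Local Open Scope ring_scope.

Section Defs.
Variables (R : realType) (n : nat).
Local Notation vec := 'rV[R]_n.

Definition dotp (u v : vec) : R := \sum_(i < n) u ord0 i * v ord0 i.
Definition enorm (u : vec) : R := Num.sqrt (dotp u u).

Definition convex_set_ (A : set vec) : Prop :=
  forall x y t, A x -> A y -> 0 <= t -> t <= 1 -> A (t *: x + (1 - t) *: y).

Definition is_proj (A : set vec) (P : vec -> vec) : Prop :=
  forall y, A (P y) /\ forall z, A z -> enorm (y - P y) <= enorm (y - z).

Definition op_monotone (D : set vec) (G : vec -> vec) : Prop :=
  forall x y, D x -> D y -> 0 <= dotp (G x - G y) (x - y).

Definition op_strongly_monotone (D : set vec) (G : vec -> vec) (mu : R) : Prop :=
  forall x y, D x -> D y -> mu * enorm (x - y) ^+ 2 <= dotp (G x - G y) (x - y).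

Definition op_lipschitz (D : set vec) (G : vec -> vec) (L : R) : Prop :=
  forall x y, D x -> D y -> enorm (G x - G y) <= L * enorm (x - y).

Definition VIsol (X : set vec) (F : vec -> vec) : set vec :=
  [set x | X x /\ forall y, X y -> 0 <= dotp (F x) (y - x)].

Definition diam (X : set vec) : R :=
  sup [set enorm (x - y) | x in X & y in X].

(* the iterate x_{k-1}, with the convention x_{-1} = x_0 *)
Definition prev_iter (x : nat -> vec) (k : nat) : vec :=
  if k is k'.+1 then x k' else x 0%N.
End Defs.

Definition Lk {R : realType} (LF LH : R) (eta : nat -> R) (k : nat) : R :=
  LF + eta k * LH.

Definition betak {R : realType} (LF LH mu : R) (lam eta : nat -> R) (k : nat) : R :=
  ((1 - lam k ^+ 2 * Lk LF LH eta k ^+ 2)^-1 + (2 * lam k * eta k * mu)^-1)^-1.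

Definition pk {R : realType} (beta : nat -> R) (k : nat) : R :=
  (\prod_(i < k.+1) (1 - beta i))^-1.

(* p_{j-1}, with p_{-1} := 1 *)
Definition pprev {R : realType} (beta : nat -> R) (j : nat) : R :=
  if j is j'.+1 then pk beta j' else 1.

Definition deltak {R : realType} {n : nat} (alpha : nat -> R) (x : nat -> 'rV[R]_n)
  (k : nat) : R :=
  alpha k * (1 + alpha k) * enorm (x k - prev_iter x k) ^+ 2.

From HB Require Import structures.
From mathcomp Require Import all_boot all_order all_algebra.
From mathcomp Require Import all_classical all_reals all_analysis.
From mathcomp Require Import lra.
Import Order.TTheory GRing.Theory Num.Theory.
Import numFieldNormedType.Exports.
Local Open Scope classical_set_scope.
Local Open Scope ring_scope.

(* Only two facts about the method matter: every iterate x_k is a projection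
   onto X, so ||x_j - x_{j-1}|| <= D_X; and the recursion on alpha gives
   alpha_j <= prod_{i<j} (1 - beta_i) = 1 / p_{j-1} <= 1.  Hence
   p_{j-1} delta_j <= (1 + alpha_j) D_X^2 <= 2 D_X^2, and summing k such
   terms gives the bound. *)

Section Diameter.
Variables (R : realType) (n : nat).
Implicit Types (u a b : 'rV[R]_n) (X : set 'rV[R]_n).

Lemma enorm_ge0 u : 0 <= enorm u.
Proof. exact: sqrtr_ge0. Qed.

Lemma enorm_le_mx_norm u : enorm u <= n%:R * `|u|.
Proof.
have entry_le i : `|u ord0 i| <= `|u|.
  change (`|u ord0 i| <= mx_norm u); rewrite mx_normrE.
  by apply/bigmax_geP; right; exists (ord0, i).
have nu0 : 0 <= n%:R * `|u| by rewrite mulr_ge0.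
rewrite -(ger0_norm nu0) -sqrtr_sqr ler_sqrt ?sqr_ge0 // /dotp.
apply: (@le_trans _ _ (\sum_(i < n) `|u| ^+ 2)).
  apply: ler_sum => i _; rewrite -expr2 -real_normK ?num_real //.
  by rewrite lerXn2r ?nnegrE.
rewrite sumr_const card_ord -[_ *+ n]mulr_natl exprMn ler_wpM2r ?sqr_ge0 //.
by rewrite -natrX ler_nat; case: n => // m; rewrite leq_pmulr.
Qed.

Lemma enorm_sub_le_diam X a b :
  compact X -> X a -> X b -> enorm (a - b) <= diam X.
Proof.
move=> cX Xa Xb; apply: ub_le_sup; last by exists a => //; exists b.
have [B [_ XB]] := compact_bounded cX.
have XB1 z : X z -> `|z| <= B + 1 by apply: XB; rewrite ltrDl.
exists (n%:R * ((B + 1) + (B + 1))) => _ [c Xc [d Xd <-]].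
apply: (le_trans (enorm_le_mx_norm _)); rewrite ler_wpM2l //.
by apply: (le_trans (ler_normB _ _)); rewrite lerD ?XB1.
Qed.

End Diameter.

Section Inertia.
Variable R : realType.
Implicit Types (alpha b : nat -> R).

Lemma alpha_le_prod alpha b j :
  alpha 0%N <= 1 -> (forall i, b i <= 1) ->
  (forall i, alpha i.+1 <= (1 - b i) * alpha i) ->
  alpha j <= \prod_(i < j) (1 - b i).
Proof.
move=> a01 b1 aS; elim: j => [|j IH]; first by rewrite big_ord0.
rewrite big_ord_recr /= mulrC; apply: le_trans (aS j) _.
by rewrite ler_wpM2l // subr_ge0.
Qed.

Lemma pprev_prod b j : pprev b j = (\prod_(i < j) (1 - b i))^-1.
Proof. by case: j => [|j] //=; rewrite big_ord0 invr1. Qed.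

Lemma inertial_term_bound (P a e D : R) :
  0 < P -> P <= 1 -> 0 <= a -> a <= P -> 0 <= e -> e <= D ->
  P^-1 * (a * (1 + a) * e ^+ 2) <= 2 * D ^+ 2.
Proof.
move=> P0 P1 a0 aP e0 eD.
rewrite ler_pdivrMl // [P * _]mulrA.
have e2 : e ^+ 2 <= D ^+ 2 by rewrite lerXn2r ?nnegrE ?(le_trans e0).
apply: ler_pM; rewrite ?sqr_ge0 ?mulr_ge0 ?addr_ge0 //.
by apply: ler_pM => //; [rewrite addr_ge0 | lra].
Qed.

End Inertia.

Lemma betak_in01 (R : realType) (LF LH mu : R) (lam eta : nat -> R) k :
  0 < LF -> 0 < LH -> 0 < mu -> 0 < lam k -> 0 < eta k ->
  lam k < (Lk LF LH eta k)^-1 ->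
  0 < betak LF LH mu lam eta k < 1.
Proof.
move=> LF0 LH0 mu0 lam0 eta0 lamL; rewrite /betak -exprMn.
have L0 : 0 < Lk LF LH eta k by rewrite addr_gt0 // mulr_gt0.
have t1 : lam k * Lk LF LH eta k < 1 by rewrite -(ltr_pM2r L0) mulVf ?gt_eqF in lamL.
have t0 : 0 < lam k * Lk LF LH eta k by rewrite mulr_gt0.
move: t0 t1; set t := _ * _ => t0 t1.
have s1 : 1 <= (1 - t ^+ 2)^-1 by rewrite invf_ge1 ?subr_gt0 ?expr2; nra.
have c0 : 0 < (2 * lam k * eta k * mu)^-1 by rewrite invr_gt0 !mulr_gt0.
have s0 : 1 < (1 - t ^+ 2)^-1 + (2 * lam k * eta k * mu)^-1.
  by apply: le_lt_trans s1 _; rewrite ltrDl.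
by rewrite invr_gt0 invf_lt1 ?(lt_trans ltr01) // (lt_trans ltr01).
Qed.

Theorem lemma4p13 (R : realType) (n : nat)
  (F H : 'rV[R]_n -> 'rV[R]_n) (DomF DomH X Omega : set 'rV[R]_n)
  (PX POm : 'rV[R]_n -> 'rV[R]_n) (LF LH mu : R)
  (alpha lam eta : nat -> R) (x w w' y : nat -> 'rV[R]_n) :
  (* F and H monotone and Lipschitz on their domains *)
  op_monotone DomF F -> op_monotone DomH H ->
  0 < LF -> 0 < LH ->
  op_lipschitz DomF F LF -> op_lipschitz DomH H LH ->
  (* H is mu-strongly monotone *)
  0 < mu -> op_strongly_monotone DomH H mu ->
  (* X compact convex nonempty, Omega closed convex nonempty, X ⊂ Ω ⊂ Dom F ∩ Dom H *)
  X !=set0 -> compact X -> convex_set_ X ->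
  Omega !=set0 -> closed Omega -> convex_set_ Omega ->
  X `<=` Omega -> Omega `<=` DomF `&` DomH ->
  is_proj X PX -> is_proj Omega POm ->
  (* Q nonempty *)
  VIsol X F !=set0 ->
  (* parameters *)
  (forall k, 0 <= alpha k) -> (forall k, 0 < lam k) -> (forall k, 0 < eta k) ->
  (* IneIREG iterates, x_{-1} = x_0 *)
  X (x 0%N) ->
  (forall k, w k = x k + alpha k *: (x k - prev_iter x k)) ->
  (forall k, w' k = POm (w k)) ->
  (forall k, y k = PX (w k - lam k *: (F (w' k) + eta k *: H (w' k)))) ->
  (forall k, x k.+1 = PX (w k - lam k *: (F (y k) + eta k *: H (y k)))) ->
  (* step sizes and inertial parameters *)
  (forall k, lam k < (Lk LF LH eta k)^-1) ->
  0 <= alpha 0%N <= 1 ->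
  (forall k, alpha k.+1 <= (1 - betak LF LH mu lam eta k) * alpha k) ->
  forall k : nat, (1 <= k)%N ->
    \sum_(j < k) pprev (betak LF LH mu lam eta) j * deltak alpha x j
      <= 2 * k%:R * diam X ^+ 2.
Proof.
move=> _ _ LF0 LH0 _ _ mu0 _ _ cX _ _ _ _ _ _ PXP _ _ alpha0 lam0 eta0 X0
  _ _ _ xS lamL /andP[_ alpha1] alphaS k _.
set beta := betak LF LH mu lam eta.
have beta01 i : 0 < beta i < 1 by exact: betak_in01.
have beta_le1 i : beta i <= 1 by case/andP: (beta01 i) => _ /ltW.
have factor01 i : 0 <= 1 - beta i <= 1.
  by case/andP: (beta01 i) => /ltW b0 /ltW b1; rewrite subr_ge0 b1 gerBl b0.
have Xx j : X (x j) by case: j => [|j] //; rewrite xS; exact: (PXP _).1.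
have Xprev j : X (prev_iter x j) by case: j => [|j] /=.
have term j : pprev beta j * deltak alpha x j <= 2 * diam X ^+ 2.
  rewrite pprev_prod /deltak; apply: inertial_term_bound.
  - by apply: prodr_gt0 => i _; rewrite subr_gt0; case/andP: (beta01 i).
  - exact: prodr_ile1.
  - exact: alpha0.
  - exact: alpha_le_prod.
  - exact: enorm_ge0.
  - exact: enorm_sub_le_diam.
apply: (@le_trans _ _ (\sum_(j < k) 2 * diam X ^+ 2)).
  by apply: ler_sum => j _; exact: term.
by rewrite sumr_const card_ord -[_ *+ k]mulr_natr mulrAC.
Qed.
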